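(* Assume that for all $0\le i,j\le d$: $E^*_iAE^*_j=0$ if $i-j>1$, and $E^*_iAE^*_j\ne0$ if $i-j=1$. Let $v^*_0$ be a nonzero vector in $E^*_0V$. Then the $\mathbb K$-linear map $\mathcal D\to V$, $X\mapsto Xv^*_0$, is an isomorphism of $\mathbb K$-vector spaces.
   Context: Let $\mathbb K$ be a field, $d\ge 0$ an integer, and $\mathcal A$ a $\mathbb K$-algebra isomorphic to $\mathrm{Mat}_{d+1}(\mathbb K)$, with identity $I$. An element of $\mathcal A$ is multiplicity-free if it has $d+1$ mutually distinct eigenvalues, all in $\mathbb K$; for such $A$ with eigenvalues $\theta_0,\ldots,\theta_d$, the primitive idempotent associated with $\theta_i$ is $E_i=\prod_{j\ne i}(A-\theta_jI)/(\theta_i-\theta_j)$. Standing setup: $A,A^*$ are multiplicity-free elements of $\mathcal A$ ($A^*$ is just a name, not an adjoint); $E_0,\ldots,E_d$ is an ordering of the primitive idempotents of $A$; $E^*_0,\ldots,E^*_d$ is an ordering of the primitive idempotents of $A^*$; $\mathcal D$ is the subalgebra of $\mathcal A$ generated by $A$; $V$ is an irreducible left $\mathcal A$-module. *)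

From HB Require Import structures.
From mathcomp Require Import all_boot all_order all_algebra.
Set Implicit Arguments. Unset Strict Implicit. Unset Printing Implicit Defensive.
Import GRing.Theory.
Local Open Scope ring_scope.

(* The ambient algebra is Mat_{d+1}(K) = 'M[K]_d.+1. *)

Definition mult_free (K : fieldType) (d : nat) (A : 'M[K]_d.+1) : Prop :=
  exists th : 'I_d.+1 -> K, injective th /\ forall i, eigenvalue A (th i).

Definition prim_idem (K : fieldType) (d : nat) (A : 'M[K]_d.+1)
  (th : 'I_d.+1 -> K) (i : 'I_d.+1) : 'M[K]_d.+1 :=
  \prod_(j < d.+1 | j != i) ((th i - th j)^-1 *: (A - (th j)%:M)).

(* D: the subalgebra generated by A (= polynomials in A). *)
Definition in_gen_subalg (K : fieldType) (d : nat) (A X : 'M[K]_d.+1) : Prop :=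
  exists p : {poly K}, X = horner_mx A p.

Definition is_left_module (K : fieldType) (d : nat) (V : lmodType K)
  (act : 'M[K]_d.+1 -> V -> V) : Prop :=
  [/\ forall X Y v, act (X + Y) v = act X v + act Y v,
      forall (c : K) X v, act (c *: X) v = c *: act X v,
      forall X u w, act X (u + w) = act X u + act X w &
      forall X (c : K) u, act X (c *: u) = c *: act X u] /\
  [/\ forall v, act 1%:M v = v
    & forall X Y v, act (X *m Y) v = act X (act Y v)].

Definition is_submodule (K : fieldType) (d : nat) (V : lmodType K)
  (act : 'M[K]_d.+1 -> V -> V) (S : V -> Prop) : Prop :=
  [/\ S 0, forall u w, S u -> S w -> S (u + w),
      forall (c : K) u, S u -> S (c *: u)
    & forall X u, S u -> S (act X u)].

Definition irreducible_module (K : fieldType) (d : nat) (V : lmodType K)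
  (act : 'M[K]_d.+1 -> V -> V) : Prop :=
  is_left_module act /\ (exists v : V, v != 0) /\
  forall S : V -> Prop, is_submodule act S ->
    (forall v, S v -> v = 0) \/ (forall v, S v).

(* Diagonalizing A* by P gives E*_i = P^-1 e_ii P, so the hypotheses say that B := P A P^-1 is
   upper Hessenberg with nonzero subdiagonal.  Then B^k e_0 has its last nonzero entry in row k,
   so u := P^-1 e_0 is a cyclic vector for A and a polynomial in A is determined by its value
   at u.  On the module side E*_0 = u r has rank one and fixes v0, hence X v0 = (X u) r v0 and
   c |-> c r v0 is injective; irreducibility makes X |-> X v0 onto V. *)

From HB Require Import structures.
From mathcomp Require Import all_boot all_order all_algebra.

Set Implicit Arguments.
Unset Strict Implicit.
Unset Printing Implicit Defensive.
Import GRing.Theory.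
Local Open Scope ring_scope.

Section PrimitiveIdempotents.

Variables (K : fieldType) (d : nat) (As : 'M[K]_d.+1) (ths : 'I_d.+1 -> K).
Hypothesis ths_inj : injective ths.

Lemma eigenvector_mul_prim_idem (x : 'rV[K]_d.+1) (j i : 'I_d.+1) :
  x *m As = ths j *: x -> x *m prim_idem As ths i = (j == i)%:R *: x.
Proof.
move=> xE; rewrite /prim_idem.
have -> : x *m \prod_(k < d.+1 | k != i) ((ths i - ths k)^-1 *: (As - (ths k)%:M))
    = (\prod_(k < d.+1 | k != i) ((ths i - ths k)^-1 * (ths j - ths k))) *: x.
  apply: (big_ind2 (fun c M => x *m M = c *: x)).
  - by rewrite mulmx1 scale1r.
  - move=> a M b N xM xN.
    by rewrite -mulmxE mulmxA xM -scalemxAl xN scalerA mulrC.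
  - move=> k _.
    by rewrite -scalemxAr mulmxBr xE mul_mx_scalar -scalerBl scalerA.
have [<-|neq_ji] := eqVneq j i.
  rewrite big1 ?scale1r // => k neq_kj; rewrite mulVf // subr_eq0.
  by apply: contra neq_kj => /eqP /ths_inj ->.
by rewrite (bigD1 j) //= subrr mulr0 mul0r !scale0r.
Qed.

Hypothesis ths_eigen : forall i, eigenvalue As (ths i).

Lemma prim_idem_similar_delta :
  exists2 P : 'M[K]_d.+1, P \in unitmx &
    forall i, prim_idem As ths i = invmx P *m delta_mx i i *m P.
Proof.
have eigenrow i : exists x : 'rV[K]_d.+1, (x *m As == ths i *: x) && (x != 0).
  by case/eigenvalueP: (ths_eigen i) => x xE nz_x; exists x; rewrite xE eqxx.
pose x i := xchoose (eigenrow i).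
have xE i : x i *m As = ths i *: x i by case/andP: (xchooseP (eigenrow i)) => /eqP.
have nz_x i : x i != 0 by case/andP: (xchooseP (eigenrow i)).
have xEi j i : x j *m prim_idem As ths i = (j == i)%:R *: x j.
  exact: eigenvector_mul_prim_idem (xE j).
pose P := \matrix_j x j.
have PE i : P *m prim_idem As ths i = delta_mx i i *m P.
  apply/row_matrixP => j; rewrite !row_mul rowK xEi rowE mul_delta_mx_cond.
  by case: eqVneq => [->|_]; rewrite ?mulr0n ?mul0mx ?scale0r // -rowE rowK scale1r.
have Pu : P \in unitmx.
  rewrite -row_free_unit -kermx_eq0; apply/rowV0P => w /sub_kermxP wP.
  apply/rowP => i; rewrite mxE.
  have : w *m P *m prim_idem As ths i = 0 by rewrite wP mul0mx.
  rewrite [w *m P]mulmx_sum_row mulmx_suml (bigD1 i) //= big1 => [|j neq_ji]; last first.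
    by rewrite rowK -scalemxAl xEi (negPf neq_ji) scale0r scaler0.
  rewrite addr0 rowK -scalemxAl xEi eqxx scale1r => /eqP.
  by rewrite scalemx_eq0 (negPf (nz_x i)) orbF => /eqP.
by exists P => // i; rewrite -mulmxA -PE mulKmx.
Qed.

End PrimitiveIdempotents.

Lemma delta_mx_sandwich (R : comPzRingType) (n : nat) (B : 'M[R]_n) (i j : 'I_n) :
  delta_mx i i *m B *m delta_mx j j = B i j *: delta_mx i j.
Proof.
rewrite -(mul_delta_mx (0 : 'I_1) i i) -(mul_delta_mx (0 : 'I_1) j j).
rewrite -!mulmxA [delta_mx 0 i *m _]mulmxA -rowE [row i B *m _]mulmxA -colE.
have -> : col j (row i B) = (B i j)%:M.
  by apply/matrixP => a b; rewrite !ord1 !mxE eqxx mulr1n.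
by rewrite mul_scalar_mx -scalemxAr mul_delta_mx.
Qed.

Lemma conj_delta_sandwich_eq0 (K : fieldType) (n : nat) (P A : 'M[K]_n) (i j : 'I_n) :
  P \in unitmx ->
  ((invmx P *m delta_mx i i *m P) *m A *m (invmx P *m delta_mx j j *m P) == 0)
    = ((P *m A *m invmx P) i j == 0).
Proof.
move=> Pu.
have -> : (invmx P *m delta_mx i i *m P) *m A *m (invmx P *m delta_mx j j *m P)
    = invmx P *m (delta_mx i i *m (P *m A *m invmx P) *m delta_mx j j) *m P.
  by rewrite !mulmxA.
have conj_eq0 (M : 'M[K]_n) : (invmx P *m M *m P == 0) = (M == 0).
  apply/eqP/eqP => [/(congr1 (fun X => P *m X *m invmx P))|->]; last first.
    by rewrite mulmx0 mul0mx.
  by rewrite !mulmxA mulmxV // mul1mx mulmxK // mulmx0 mul0mx.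
rewrite delta_mx_sandwich conj_eq0 scalemx_eq0 orbC.
suff /negPf -> : delta_mx i j != 0 :> 'M[K]_n by [].
by apply/matrix0Pn; exists i, j; rewrite mxE !eqxx oner_neq0.
Qed.

Section KrylovMatrix.

Variable K : fieldType.

Definition krylov_mx (n : nat) (A : 'M[K]_n) (u : 'cV[K]_n) : 'M[K]_n :=
  \matrix_(i, k) (A ^+ k *m u) i 0.

Lemma mul_krylov_mx (m n : nat) (M : 'M[K]_(m, n)) (A : 'M[K]_n) (u : 'cV[K]_n) :
  M *m krylov_mx A u = \matrix_(i, k) (M *m (A ^+ k *m u)) i 0.
Proof.
by apply/matrixP => i k; rewrite !mxE; apply: eq_bigr => j _; rewrite mxE.
Qed.

Lemma krylov_mx_conj (n : nat) (P A : 'M[K]_n) (u : 'cV[K]_n) : P \in unitmx ->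
  P *m krylov_mx A u = krylov_mx (P *m A *m invmx P) (P *m u).
Proof.
move=> Pu; have powE k : (P *m A *m invmx P) ^+ k *m (P *m u) = P *m (A ^+ k *m u).
  elim: k => [|k IHk]; first by rewrite !expr0 !mul1mx.
  by rewrite !exprS -!mulmxE -mulmxA IHk !mulmxA mulmxKV.
by rewrite mul_krylov_mx; apply/matrixP => i k; rewrite mxE [RHS]mxE powE.
Qed.

Lemma mul_krylov_mx_col (n : nat) (A : 'M[K]_n) (u c : 'cV[K]_n) :
  krylov_mx A u *m c = \sum_k c k 0 *: (A ^+ k *m u).
Proof.
apply/matrixP => i j; rewrite ord1 summxE !mxE; apply: eq_bigr => k _.
by rewrite !mxE mulrC.
Qed.

Section Hessenberg.

Variables (n : nat) (B : 'M[K]_n.+1).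
Hypothesis B_hessenberg : forall i j : 'I_n.+1, (j.+1 < i)%N -> B i j = 0.
Hypothesis B_subdiag : forall i j : 'I_n.+1, i = j.+1 :> nat -> B i j != 0.

Lemma hessenberg_exp_delta_below (k : nat) (i : 'I_n.+1) :
  (k < i)%N -> (B ^+ k *m (delta_mx 0 0 : 'cV_n.+1)) i 0 = 0.
Proof.
elim: k i => [|k IHk] i lt_ki.
  by rewrite expr0 mul1mx mxE andbT; case: eqP lt_ki => // ->.
rewrite exprS -mulmxE -mulmxA mxE; apply: big1 => m _.
have [lt_km|le_mk] := ltnP k m; first by rewrite IHk ?mulr0.
by rewrite B_hessenberg ?mul0r // (leq_ltn_trans _ lt_ki).
Qed.

Lemma hessenberg_exp_delta_diag (k : nat) (i : 'I_n.+1) :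
  i = k :> nat -> (B ^+ k *m (delta_mx 0 0 : 'cV_n.+1)) i 0 != 0.
Proof.
elim: k i => [|k IHk] i ik.
  by rewrite expr0 mul1mx mxE (_ : i = 0) ?eqxx ?oner_neq0 //; apply: val_inj.
have lt_k : (k < n.+1)%N by rewrite -ltnS -ik ltnS ltnW.
rewrite exprS -mulmxE -mulmxA mxE (bigD1 (Ordinal lt_k)) //= big1 ?addr0.
  by rewrite mulf_neq0 ?B_subdiag ?IHk.
move=> m neq_mk; have [lt_km|le_mk] := ltnP k m.
  by rewrite hessenberg_exp_delta_below ?mulr0.
rewrite B_hessenberg ?mul0r // ik ltnS ltn_neqAle le_mk andbT.
by apply: contra neq_mk => /eqP eq_mk; apply/eqP/val_inj.
Qed.

Lemma hessenberg_krylov_unit : krylov_mx B (delta_mx 0 0 : 'cV_n.+1) \in unitmx.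
Proof.
rewrite -unitmx_tr unitmxE det_trig.
  rewrite unitfE; apply/prodf_neq0 => i _.
  by rewrite 2!mxE; apply: hessenberg_exp_delta_diag.
by apply/is_trig_mxP => i j lt_ij; rewrite 2!mxE; apply: hessenberg_exp_delta_below.
Qed.

End Hessenberg.

Section CyclicVector.

Variables (n : nat) (A : 'M[K]_n.+1) (u : 'cV[K]_n.+1).
Hypothesis krylov_unit : krylov_mx A u \in unitmx.

Lemma cyclic_vector_horner_onto (c : 'cV[K]_n.+1) :
  exists q : {poly K}, horner_mx A q *m u = c.
Proof.
pose w := invmx (krylov_mx A u) *m c.
exists (\sum_(k < n.+1) (w k 0)%:P * 'X^k).
rewrite -(mulKVmx krylov_unit c) -/w mul_krylov_mx_col rmorph_sum mulmx_suml.
apply: eq_bigr => k _; rewrite rmorphM /= horner_mx_C rmorphXn /= horner_mx_X.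
by rewrite -mulmxE -mulmxA mul_scalar_mx.
Qed.

Lemma cyclic_vector_comm_eq0 (Z : 'M[K]_n.+1) : comm_mx A Z -> Z *m u = 0 -> Z = 0.
Proof.
move=> ZA Zu; have ZAk k : Z *m A ^+ k = A ^+ k *m Z.
  elim: k => [|k IHk]; first by rewrite expr0 mulmx1 mul1mx.
  by rewrite exprS -mulmxE mulmxA -ZA -mulmxA IHk mulmxA.
rewrite -[Z](mulmxK krylov_unit) mul_krylov_mx.
suff -> : \matrix_(i, k) (Z *m (A ^+ k *m u)) i 0 = 0 :> 'M_n.+1 by rewrite mul0mx.
by apply/matrixP => i k; rewrite mxE [RHS]mxE mulmxA ZAk -mulmxA Zu mulmx0 mxE.
Qed.

End CyclicVector.

End KrylovMatrix.

Section ModuleAction.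

Variables (K : fieldType) (d : nat) (V : lmodType K) (act : 'M[K]_d.+1 -> V -> V).
Hypothesis act_mod : is_left_module act.

Lemma actDl X Y v : act (X + Y) v = act X v + act Y v.
Proof. by case: act_mod => [[]]. Qed.

Lemma actDr X u w : act X (u + w) = act X u + act X w.
Proof. by case: act_mod => [[]]. Qed.

Lemma act1 v : act 1%:M v = v.
Proof. by case: act_mod => _ []. Qed.

Lemma actM X Y v : act (X *m Y) v = act X (act Y v).
Proof. by case: act_mod => _ []. Qed.

Lemma actZl (c : K) X v : act (c *: X) v = c *: act X v.
Proof. by case: act_mod => [[]]. Qed.

Lemma act0r X : act X 0 = 0.
Proof. by apply: (addrI (act X 0)); rewrite -actDr !addr0. Qed.

Lemma act0l v : act 0 v = 0.
Proof. by apply: (addrI (act 0 v)); rewrite -actDl !addr0. Qed.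

Lemma actBl X Y v : act (X - Y) v = act X v - act Y v.
Proof. by apply/eqP; rewrite eq_sym subr_eq -actDl subrK. Qed.

Lemma irreducible_orbit_onto (v : V) : irreducible_module act -> v != 0 ->
  forall w, exists X, act X v = w.
Proof.
case=> _ [_ irr] nz_v w.
have orbit_sub : is_submodule act (fun w => exists X, act X v = w).
  split.
  - by exists 0; rewrite act0l.
  - by move=> _ _ [X <-] [Y <-]; exists (X + Y); rewrite actDl.
  - by move=> c _ [X <-]; exists (c *: X); rewrite actZl.
  - by move=> M _ [X <-]; exists (M *m X); rewrite actM.
case: (irr _ orbit_sub) => [orbit0|]; last exact.
by case/eqP: nz_v; apply: orbit0; exists 1%:M; rewrite act1.
Qed.

Variables (u : 'cV[K]_d.+1) (r : 'rV[K]_d.+1) (v0 : V).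
Hypothesis v0_fixed : act (u *m r) v0 = v0.
Hypothesis v0_neq0 : v0 != 0.

Lemma act_through_rank_one X : act X v0 = act (X *m u *m r) v0.
Proof. by rewrite -{1}v0_fixed -actM mulmxA. Qed.

Lemma act_rank_one_eq0 (c : 'cV[K]_d.+1) : act (c *m r) v0 = 0 -> c = 0.
Proof.
move=> cv0; apply/eqP; apply: contraT => /matrix0Pn [i [j cij]].
have Mc : ((c i j)^-1 *: (u *m delta_mx 0 i)) *m c = u.
  rewrite -scalemxAl -mulmxA -rowE.
  have -> : row i c = (c i j)%:M by apply/matrixP => a b; rewrite !ord1 !mxE eqxx mulr1n.
  by rewrite mul_mx_scalar scalerA mulVf ?scale1r.
by case/eqP: v0_neq0; rewrite -v0_fixed -Mc -mulmxA actM cv0 act0r.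
Qed.

End ModuleAction.

Theorem corollary3p3 (K : fieldType) (d : nat) (A As : 'M[K]_d.+1)
  (ths : 'I_d.+1 -> K) (V : lmodType K) (act : 'M[K]_d.+1 -> V -> V) :
  mult_free A ->
  injective ths -> (forall i, eigenvalue As (ths i)) ->
  irreducible_module act ->
  (forall i j : 'I_d.+1, (j.+1 < i)%N ->
     prim_idem As ths i *m A *m prim_idem As ths j = 0) ->
  (forall i j : 'I_d.+1, i = j.+1 :> nat ->
     prim_idem As ths i *m A *m prim_idem As ths j != 0) ->
  forall v0 : V, v0 != 0 ->
  (exists w : V, v0 = act (prim_idem As ths ord0) w) ->
  (forall X Y, in_gen_subalg A X -> in_gen_subalg A Y ->
     act X v0 = act Y v0 -> X = Y) /\
  (forall w : V, exists2 X, in_gen_subalg A X & act X v0 = w).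
Proof.
move=> _ ths_inj ths_eigen act_irr EAE0 EAE_neq0 v0 nz_v0 [w0 v0E].
have act_mod := act_irr.1.
have [P Pu EP] := prim_idem_similar_delta ths_inj ths_eigen.
pose u := col 0 (invmx P); pose r := row 0 P.
have E0E : prim_idem As ths ord0 = u *m r.
  by rewrite EP /u /r colE rowE -(mul_delta_mx (0 : 'I_1)) !mulmxA.
have v0_fixed : act (u *m r) v0 = v0.
  by rewrite v0E -E0E -actM // !EP !mulmxA mulmxK // -[in LHS](mulmxA (invmx P)) mul_delta_mx.
have krylovA_unit : krylov_mx A u \in unitmx.
  suff: P *m krylov_mx A u \in unitmx by rewrite unitmx_mul => /andP[].
  rewrite krylov_mx_conj // /u colE mulmxA mulmxV // mul1mx.
  apply: hessenberg_krylov_unit => i j ij.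
    by apply/eqP; rewrite -conj_delta_sandwich_eq0 // -!EP EAE0.
  by rewrite -conj_delta_sandwich_eq0 // -!EP EAE_neq0.
split=> [_ _ [p ->] [q ->] act_pq | w].
  apply/subr0_eq/(cyclic_vector_comm_eq0 krylovA_unit).
    by rewrite -rmorphB; apply: comm_mx_horner; apply: comm_mx_refl.
  apply: (act_rank_one_eq0 act_mod v0_fixed nz_v0).
  by rewrite -act_through_rank_one // actBl // act_pq subrr.
have [X <-] := irreducible_orbit_onto act_mod act_irr nz_v0 w.
have [q qu] := cyclic_vector_horner_onto krylovA_unit (X *m u).
exists (horner_mx A q); first by exists q.
by rewrite !(act_through_rank_one act_mod v0_fixed (horner_mx A q)) qu -act_through_rank_one.
Qed.
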